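(* For every integer $P\ge1$ and every integer $k\ge2$, $$\sum_{i\in\{0\}\times\mathbb Z_{\ge0}^{k-1}}\exp\Bigl(-\ln(4)\sum_{j=2}^k\mathbb 1\{i_j>i_{j-1}\}\Bigl\lfloor\frac{i_j-i_{j-1}}{P}\Bigr\rfloor\Bigr)\le c\,(9P)^{k-1},\qquad c:=\mathrm e^{2+1/12}/2,$$ where $i=(i_1,\dots,i_k)$ with $i_1=0$. *)

From HB Require Import structures.
From mathcomp Require Import all_boot all_order all_algebra.
From mathcomp Require Import all_classical all_reals all_analysis.
Set Implicit Arguments. Unset Strict Implicit. Unset Printing Implicit Defensive.
Import Order.TTheory GRing.Theory Num.Theory.
Local Open Scope ring_scope.

(* A multi-index i = (i_1,...,i_k) is a list s of naturals of size k, with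
   i_{j+1} = nth 0 s j (0-based list indexing). *)
Definition index_set (k : nat) : set (seq nat) :=
  [set s | size s = k /\ nth 0%N s 0 = 0%N].

Definition jump_count (P : nat) (s : seq nat) : nat :=
  \sum_(1 <= j < size s)
     (if (nth 0 s j.-1 < nth 0 s j)%N then ((nth 0 s j - nth 0 s j.-1) %/ P)%N
      else 0%N).

Definition weight (R : realType) (P : nat) (s : seq nat) : R :=
  expR (- ln 4 * (jump_count P s)%:R).

Definition lemma6_c (R : realType) : R := expR (2 + 12^-1) / 2.
Arguments weight R P s : clear implicits.
Arguments lemma6_c R : clear implicits.

From HB Require Import structures.
From mathcomp Require Import all_boot all_order all_algebra.
From mathcomp Require Import all_classical all_reals all_analysis.
From mathcomp Require Import ring lra.
Import Order.TTheory GRing.Theory Num.Theory.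
Local Open Scope classical_set_scope.
Local Open Scope ring_scope.

(* Put phi y := 2 ^ (y / P). One step of the multi-index loses at most a
   factor 6P against phi:  sum_y 4 ^ (- jump x y) * phi y <= 6P * phi x.
   Indeed, with a := x / P, the P values of y in a block y / P = i <= a
   contribute at most 2 ^ i each, while for i > a the jump is at least
   i - a - 1, so 4 ^ (- jump) turns 2 ^ i into the decaying
   2 ^ (a + 1) * 2 ^ (a + 1 - i); the two geometric sums total at most
   6 * 2 ^ a. Iterating from i_1 = 0 bounds the sum over every box of
   multi-indices by (6P) ^ (k - 1) <= c (9P) ^ (k - 1), and the esum is the
   supremum of sums over finite sets, each of which lies in such a box. *)

Fixpoint tuples_below (M m : nat) : seq (seq nat) :=
  if m is m'.+1 then [seq y :: t | y <- index_iota 0 M, t <- tuples_below M m']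
  else [:: [::]].

Lemma tuples_below_uniq M m : uniq (tuples_below M m).
Proof.
elim: m => [|m IH] //=; apply: allpairs_uniq => //; first exact: iota_uniq.
by move=> [y t] [y' t'] _ _ /= [-> ->].
Qed.

Lemma mem_tuples_below M t :
  all (fun y => y < M)%N t -> t \in tuples_below M (size t).
Proof.
elim: t => [|y t IH] //= /andP[yM tM].
by apply/allpairsP; exists (y, t); rewrite mem_index_iota yM IH.
Qed.

Lemma finite_set_seq_bounded (X : set (seq nat)) : finite_set X ->
  exists M, forall s, X s -> all (fun y => y < M)%N s.
Proof.
move=> /finite_seqP[L ->]; exists (\max_(s <- L) \max_(y <- s) y).+1.
move=> s sL; apply/allP => y ys; rewrite ltnS.
apply: (leq_trans (@leq_bigmax_seq _ s xpredT id y ys isT)).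
exact: (@leq_bigmax_seq _ L xpredT (fun s => \max_(y <- s) y) s sL isT).
Qed.

Section Tent.
Variable R : realType.

Definition tent (a i : nat) : R :=
  if (i <= a)%N then 2 ^+ i else 2 ^+ a.+1 * 2^-1 ^+ (i - a.+1).

Definition tent_primitive (a i : nat) : R :=
  if (i <= a)%N then 2 ^+ i else 2 ^+ a.+1 * (3 - 2 * 2^-1 ^+ (i - a.+1)).

Lemma tent_le_primitiveD a i :
  tent a i <= tent_primitive a i.+1 - tent_primitive a i.
Proof.
rewrite /tent /tent_primitive.
have [ia|ai|->] := ltngtP i a.
- by rewrite exprS; lra.
- set A := 2 ^+ a.+1; rewrite (subSn ai) exprS; set z := 2^-1 ^+ _.
  by have -> : A * (3 - 2 * (2^-1 * z)) - A * (3 - 2 * z) = A * z by field.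
- by rewrite subnn expr0 exprS; lra.
Qed.

Lemma sum_tent_le a N : \sum_(0 <= i < N) tent a i <= 6 * 2 ^+ a.
Proof.
apply: le_trans (ler_sum _ (fun i _ => tent_le_primitiveD a i)) _.
rewrite telescope_sumr // /tent_primitive leq0n expr0.
have two_pow_ge0 n : (0 : R) <= 2 ^+ n by apply: exprn_ge0.
case: ifP => [Na|_].
- have : (2 : R) ^+ N <= 2 ^+ a by rewrite ler_eXn2l //; lra.
  have := two_pow_ge0 a; lra.
- have : (0 : R) <= 2^-1 ^+ (N - a.+1) by apply: exprn_ge0; lra.
  have := two_pow_ge0 a; rewrite exprS; nra.
Qed.

End Tent.

Section Weight.
Variables (R : realType) (P : nat).
Hypothesis P_gt0 : (0 < P)%N.

Definition jump (x y : nat) : nat :=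
  if (x < y)%N then ((y - x) %/ P)%N else 0%N.

Lemma jump_count_cons x y t :
  jump_count P [:: x, y & t] = (jump x y + jump_count P (y :: t))%N.
Proof.
rewrite /jump_count /= big_nat_recl //=; congr (_ + _)%N.
by apply: eq_big_nat => -[|j].
Qed.

Lemma weightE s : weight R P s = 4^-1 ^+ jump_count P s.
Proof. by rewrite /weight mulrC expRM_natl expRN lnK // posrE; lra. Qed.

Lemma weight_seq1 x : weight R P [:: x] = 1.
Proof. by rewrite weightE /jump_count big_geq. Qed.

Lemma weight_cons x y t :
  weight R P [:: x, y & t] = 4^-1 ^+ jump x y * weight R P (y :: t).
Proof. by rewrite !weightE jump_count_cons exprD. Qed.

Lemma jump_le_tent x y :
  4^-1 ^+ jump x y * 2 ^+ (y %/ P) <= tent R (x %/ P) (y %/ P).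
Proof.
rewrite /tent; set a := (x %/ P)%N; set i := (y %/ P)%N.
have q_ge0 : (0 : R) <= 4^-1 by lra.
have q_le1 : (4^-1 : R) <= 1 by lra.
case: leqP => [ia|ai].
  rewrite -[X in _ <= X]mul1r ler_wpM2r ?exprn_ge0 //.
  exact: exprn_ile1.
have xy : (x < y)%N.
  by rewrite ltnNge; apply: contraTN ai; rewrite -leqNgt; exact: leq_div2r.
have e_le_jump : (i - a.+1 <= jump x y)%N.
  by rewrite /jump xy subnS -subn1 leq_subLR addnC geq_divBl.
have -> : (2 : R) ^+ i = 2 ^+ a.+1 * 2 ^+ (i - a.+1) by rewrite -exprD subnKC.
rewrite mulrCA ler_wpM2l ?exprn_ge0 //.
have two_pow_ge0 : (0 : R) <= 2 ^+ (i - a.+1) by apply: exprn_ge0.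
apply: le_trans (ler_wpM2r two_pow_ge0 (ler_wiXn2l q_ge0 q_le1 e_le_jump)) _.
by rewrite -exprMn [4^-1 * 2 : R](_ : _ = 2^-1) //; field.
Qed.

Lemma sum_jump_le x N :
  \sum_(0 <= y < N * P) (4^-1 : R) ^+ jump x y * 2 ^+ (y %/ P)
    <= 6 * P%:R * 2 ^+ (x %/ P).
Proof.
rewrite big_nat_mul.
apply: (@le_trans _ _ (\sum_(0 <= i < N) P%:R * tent R (x %/ P) i)).
  apply: ler_sum => i _.
  have block_div y : (i * P <= y < i.+1 * P)%N -> (y %/ P)%N = i.
    move=> /andP[iy yi]; apply/eqP; rewrite eqn_leq -ltnS.
    by rewrite ltn_divLR // yi leq_divRL.
  apply: le_trans (ler_sum_nat (G := fun=> tent R (x %/ P) i) _) _.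
    by move=> y /block_div <-; apply: jump_le_tent.
  by rewrite sumr_const_nat mulSn addnK mulr_natl.
rewrite -mulr_sumr [X in _ <= X]mulrAC [X in _ <= X]mulrC ler_wpM2l //.
exact: sum_tent_le.
Qed.

Lemma sum_tuples_weight_le N m x :
  \sum_(t <- tuples_below (N * P) m) weight R P (x :: t)
    <= (6 * P%:R) ^+ m * 2 ^+ (x %/ P).
Proof.
elim: m x => [|m IH] x /=.
  by rewrite big_seq1 weight_seq1 mul1r exprn_ege1 //; lra.
rewrite big_allpairs_dep /=.
under eq_bigr do under eq_bigr do rewrite weight_cons.
under eq_bigr do rewrite -mulr_sumr.
have q_ge0 : (0 : R) <= 4^-1 by lra.
apply: le_trans (ler_sum _ (fun y _ => ler_wpM2l (exprn_ge0 _ q_ge0) (IH y))) _.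
under eq_bigr do rewrite mulrCA.
rewrite -mulr_sumr exprSr -mulrA ler_wpM2l ?exprn_ge0 ?mulr_ge0 //.
exact: sum_jump_le.
Qed.

End Weight.

Lemma lemma6_c_ge1 (R : realType) : 1 <= lemma6_c R.
Proof.
rewrite /lemma6_c ler_pdivlMr //.
have := expR_ge1Dx (2 + 12^-1 : R); have : (0 : R) <= 12^-1 by [].
lra.
Qed.

Theorem lemma6 (R : realType) (P k : nat) :
  (1 <= P)%N -> (2 <= k)%N ->
  (\esum_(i in index_set k) (weight R P i)%:E
     <= (lemma6_c R * (9 * P%:R) ^+ (k - 1))%:E)%E.
Proof.
move=> P_gt0 k_ge2; apply: ge_ereal_sup => _ [X [finX Xk] <-].
have [M XM] := finite_set_seq_bounded _ finX.
set T := [seq 0%N :: t | t <- tuples_below (M * P) (k - 1)].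
have XT : {subset X <= [set` T]}.
  move=> /= s; rewrite inE => Xs; rewrite inE /=.
  have [sk s0] := Xk s Xs.
  case: s sk s0 Xs => [|y t]; first by move=> sk; move: k_ge2; rewrite -sk.
  move=> /= sk -> Xs; rewrite /T -sk subn1 /=.
  apply: map_f; apply: mem_tuples_below.
  have /andP[_ tM] := XM _ Xs.
  by apply: sub_all tM => z zM; apply: leq_trans zM (leq_pmulr M P_gt0).
apply: le_trans (lee_fsum_nneg_subset finX (finite_seq T) XT _) _.
  by move=> s _; rewrite lee_fin expR_ge0.
rewrite -fsbig_seq ?map_inj_uniq ?tuples_below_uniq //; last by move=> ? ? [].
rewrite sumEFin lee_fin big_map.
apply: le_trans (@sum_tuples_weight_le R P P_gt0 M (k - 1) 0) _.
rewrite div0n expr0 mulr1.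
have ge0_9P : (0 : R) <= 9 * P%:R by [].
apply: le_trans (ler_peMl (exprn_ge0 _ ge0_9P) (lemma6_c_ge1 R)).
by rewrite lerXn2r ?nnegrE ?ler_wpM2r //; lra.
Qed.
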